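(* Let $\mathbb{K}$ be a field, $R=\mathbb{K}\langle x,y\rangle/(xy-1)$, $I=\langle1-yx\rangle$. Let $\mathcal{C}$ be the category of weak splitting pairs and let $\Gamma$ be the quiver with vertices $u,v$, an arrow $e:v\to u$ and a loop $f$ at $v$. For a weak splitting pair $\pi=(M,\alpha)$ define the $\Gamma$-representation $\Xi(\pi)=(M_0,\operatorname{im}\alpha,\psi_e,\psi_f)$, and for a morphism $\varphi:(M,\alpha)\to(N,\beta)$ in $\mathcal{C}$ let $\Xi(\varphi)$ consist of the restrictions $\varphi|_{M_0}:M_0\to N_0$ and $\varphi|_{\operatorname{im}\alpha}:\operatorname{im}\alpha\to\operatorname{im}\beta$. Then $\Xi$ is a well-defined functor $\mathcal{C}\to\operatorname{Rep}(\Gamma)$, and after corestriction it is a functor $\Xi:\mathcal{C}\to\mathcal{D}$, where $\mathcal{D}$ is the full subcategory of $\operatorname{Rep}(\Gamma)$ of representations in which the map on the loop $f$ is invertible.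
   Context: A weak splitting pair is a pair $(M,\alpha)$ where $M$ is a left $R$-module and $\alpha:M/IM\to M$ is a $\mathbb{K}[x]$-linear splitting of the canonical projection $M\to M/IM$ (so $M=IM\oplus\operatorname{im}\alpha$ as $\mathbb{K}[x]$-modules). Morphisms $(M,\alpha)\to(N,\beta)$ in $\mathcal{C}$ are $R$-module homomorphisms $\varphi:M\to N$ with $\operatorname{im}(\varphi\circ\alpha)\subseteq\operatorname{im}\beta$. For an $R$-module $N$, $N_0=\{n\in N: xn=0\}$. For $m\in\operatorname{im}\alpha$ write $ym=m_1+m_2$ with $m_1\in IM$, $m_2\in\operatorname{im}\alpha$ (then $xm_1=0$); $\psi_e:\operatorname{im}\alpha\to M_0$ is $m\mapsto m_1$, and $\psi_f:\operatorname{im}\alpha\to\operatorname{im}\alpha$ is left multiplication by $x$. A representation of $\Gamma$ is a quadruple $(M_u,M_v,\psi_e:M_v\to M_u,\psi_f:M_v\to M_v)$ of vector spaces and linear maps; morphisms are pairs of linear maps commuting with $\psi_e,\psi_f$. *)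

From HB Require Import structures.
From mathcomp Require Import all_boot all_algebra.
Set Implicit Arguments. Unset Strict Implicit. Unset Printing Implicit Defensive.
Import GRing.Theory.
Local Open Scope ring_scope.

(* A left module over R = K<x,y>/(xy - 1): a K-vector space with K-linear
   actions of x and y satisfying x (y m) = m. *)
Record Rmod (K : fieldType) := RMod {
  Rcar :> lmodType K;
  Rx : {linear Rcar -> Rcar};
  Ry : {linear Rcar -> Rcar};
  Rxy : forall m, Rx (Ry m) = m }.

Arguments Rx {K} r : rename.
Arguments Ry {K} r : rename.

Definition Rsubmod (K : fieldType) (M : Rmod K) (S : M -> Prop) : Prop :=
  [/\ S 0, (forall a b, S a -> S b -> S (a + b)),
      (forall (k : K) a, S a -> S (k *: a)),
      (forall a, S a -> S (Rx M a)) & (forall a, S a -> S (Ry M a))].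

(* I M, for I the two-sided ideal generated by 1 - yx: the smallest
   R-submodule of M containing all (1 - yx) n. *)
Definition IM (K : fieldType) (M : Rmod K) (m : M) : Prop :=
  forall S : M -> Prop, Rsubmod S -> (forall n, S (n - Ry M (Rx M n))) -> S m.

Definition M0 (K : fieldType) (M : Rmod K) (m : M) : Prop := Rx M m = 0.

Definition Rhom (K : fieldType) (M N : Rmod K) (f : M -> N) : Prop :=
  [/\ (forall (k : K) a b, f (k *: a + b) = k *: f a + f b),
      (forall a, f (Rx M a) = Rx N (f a)) & (forall a, f (Ry M a) = Ry N (f a))].

(* The quotient M/IM (a K[x]-module) is
   modelled abstractly: a K-vector space wQ with an endomorphism wqx (action
   of x) and a surjective K-linear, x-equivariant map wp : M -> wQ whose
   kernel is exactly IM.  alpha : wQ -> M is a K[x]-linear splitting of wp. *)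
Record wsp (K : fieldType) := WSP {
  wM : Rmod K;
  wQ : lmodType K;
  wp : {linear wM -> wQ};
  wqx : {linear wQ -> wQ};
  wp_surj : forall q, exists m, wp m = q;
  wp_ker : forall m, wp m = 0 <-> IM m;
  wp_x : forall m, wp (Rx wM m) = wqx (wp m);
  walpha : {linear wQ -> wM};
  walpha_x : forall q, walpha (wqx q) = Rx wM (walpha q);
  walpha_split : forall q, wp (walpha q) = q }.

Definition imA (K : fieldType) (P : wsp K) (m : wM P) : Prop :=
  exists q, m = walpha P q.
Arguments imA {K} P m.

Definition wmor (K : fieldType) (P Q : wsp K) (phi : wM P -> wM Q) : Prop :=
  Rhom phi /\ (forall q, @imA K Q (phi (walpha P q))).

(* psi_e m = m_1, the IM-component of y m in M = IM (+) im alpha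
   (the im-alpha component being alpha (p (y m))). *)
Definition psi_e (K : fieldType) (P : wsp K) (m : wM P) : wM P :=
  Ry (wM P) m - walpha P (wp P (Ry (wM P) m)).

Definition psi_f (K : fieldType) (P : wsp K) (m : wM P) : wM P := Rx (wM P) m.
Arguments psi_e {K} P m.
Arguments psi_f {K} P m.

From mathcomp Require Import all_boot all_algebra.
Import GRing.Theory.
Set Implicit Arguments. Unset Strict Implicit. Unset Printing Implicit Defensive.
Local Open Scope ring_scope.

(* Everything rests on two facts: [m - y x m] lies in [IM], so the projection
   [wp] cannot distinguish [m] from [y x m]; and [x y = 1].  Together with the
   x-equivariance of [wp] and [alpha], they make [alpha (wp (y m))] a two-sided
   inverse of [x] on [im alpha] and force [x] to kill the [IM]-component of
   [y m].  Functoriality follows from the uniqueness of the decomposition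
   [M = IM (+) im alpha] and the stability of [IM] under R-homomorphisms. *)

Lemma IM_submod (K : fieldType) (M : Rmod K) : Rsubmod (@IM K M).
Proof.
split=> [S [] //|a b Ha Hb S HS Hgen|k a Ha S HS Hgen|a Ha S HS Hgen|a Ha S HS Hgen].
- by case: (HS) => _ SD _ _ _; apply: SD; [apply: Ha|apply: Hb].
- by case: (HS) => _ _ SZ _ _; apply: SZ; apply: Ha.
- by case: (HS) => _ _ _ SX _; apply: SX; apply: Ha.
- by case: (HS) => _ _ _ _ SY; apply: SY; apply: Ha.
Qed.

Lemma IM_gen (K : fieldType) (M : Rmod K) (n : M) : IM (n - Ry M (Rx M n)).
Proof. by move=> S _; apply. Qed.

Section RmodHomomorphism.
Variables (K : fieldType) (M N : Rmod K) (f : M -> N).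
Hypothesis f_hom : Rhom f.

Lemma Rhom_add a b : f (a + b) = f a + f b.
Proof. by case: f_hom => f_lin _ _; have := f_lin 1 a b; rewrite !scale1r. Qed.

Lemma Rhom0 : f 0 = 0.
Proof.
by case: f_hom => f_lin _ _; have := f_lin (-1) 0 0; rewrite scaler0 addr0 scaleN1r addNr.
Qed.

Lemma Rhom_scale k a : f (k *: a) = k *: f a.
Proof. by case: f_hom => f_lin _ _; have := f_lin k a 0; rewrite !addr0 Rhom0 addr0. Qed.

Lemma Rhom_sub a b : f (a - b) = f a - f b.
Proof. by rewrite Rhom_add -scaleN1r Rhom_scale scaleN1r. Qed.

Lemma Rhom_M0 m : M0 m -> M0 (f m).
Proof. by rewrite /M0; case: f_hom => _ fx _ mx0; rewrite -fx mx0 Rhom0. Qed.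

Lemma Rhom_IM m : IM m -> IM (f m).
Proof.
have [IM0 IMD IMZ IMX IMY] := IM_submod N.
case: f_hom => _ fx fy Im; apply: (Im (fun a => IM (f a))).
- split=> [|a b|k a|a|a]; first by rewrite Rhom0.
  + by rewrite Rhom_add; apply: IMD.
  + by rewrite Rhom_scale; apply: IMZ.
  + by rewrite fx; apply: IMX.
  + by rewrite fy; apply: IMY.
- by move=> n; rewrite Rhom_sub fy fx; apply: IM_gen.
Qed.

End RmodHomomorphism.

Section WeakSplittingPair.
Variables (K : fieldType) (P : wsp K).
Local Notation M := (wM P).
Local Notation x := (Rx M).
Local Notation y := (Ry M).
Local Notation alpha := (walpha P).
Local Notation p := (wp P).

Lemma imA_alpha q : imA P (alpha q).
Proof. by exists q. Qed.

Lemma alpha_p_imA m : imA P m -> alpha (p m) = m.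
Proof. by case=> q ->; rewrite walpha_split. Qed.

Lemma p_yx m : p (y (x m)) = p m.
Proof.
have /wp_ker : IM (m - y (x m)) by apply: IM_gen.
by rewrite raddfB /= => /eqP; rewrite subr_eq0 => /eqP.
Qed.

Lemma p_psi_e m : p (psi_e P m) = 0.
Proof. by rewrite /psi_e raddfB /= walpha_split subrr. Qed.

Lemma IM_psi_e m : IM (psi_e P m).
Proof. exact/wp_ker/p_psi_e. Qed.

Lemma y_sub_psi_e m : y m - psi_e P m = alpha (p (y m)).
Proof. by rewrite /psi_e opprB addrC subrK. Qed.

Lemma psi_e_unique m m1 m2 :
  y m = m1 + m2 -> IM m1 -> imA P m2 -> m1 = psi_e P m.
Proof.
move=> ym /wp_ker p_m1 [q m2E]; rewrite /psi_e ym m2E.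
by rewrite raddfD /= p_m1 add0r walpha_split addrK.
Qed.

Lemma M0_psi_e m : imA P m -> M0 (psi_e P m).
Proof.
move=> m_im; rewrite /M0 /psi_e raddfB /= Rxy -walpha_x -wp_x Rxy.
by rewrite alpha_p_imA // subrr.
Qed.

Lemma imA_psi_f m : imA P m -> imA P (psi_f P m).
Proof. by case=> q ->; exists (wqx P q); rewrite /psi_f walpha_x. Qed.

Definition psi_f_inv (m : M) : M := alpha (p (y m)).

Lemma imA_psi_f_inv m : imA P (psi_f_inv m).
Proof. exact: imA_alpha. Qed.

Lemma psi_fK m : imA P m -> psi_f_inv (psi_f P m) = m.
Proof. by move=> m_im; rewrite /psi_f_inv /psi_f p_yx alpha_p_imA. Qed.

Lemma psi_f_invK m : imA P m -> psi_f P (psi_f_inv m) = m.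
Proof. by move=> m_im; rewrite /psi_f /psi_f_inv -walpha_x -wp_x Rxy alpha_p_imA. Qed.

End WeakSplittingPair.

Section WeakSplittingMorphism.
Variables (K : fieldType) (P Q : wsp K) (phi : wM P -> wM Q).
Hypothesis phi_mor : wmor phi.

Lemma wmor_imA m : imA P m -> imA Q (phi m).
Proof. by case: phi_mor => _ phi_alpha [q ->]; apply: phi_alpha. Qed.

Lemma wmor_psi_e m : phi (psi_e P m) = psi_e Q (phi m).
Proof.
case: phi_mor => phi_hom _; case: (phi_hom) => _ _ phi_y.
apply: (psi_e_unique (m2 := phi (walpha P (wp P (Ry (wM P) m))))).
- by rewrite -phi_y -(Rhom_add phi_hom) -y_sub_psi_e addrC subrK.
- by apply: (Rhom_IM phi_hom); apply: IM_psi_e.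
- by apply: wmor_imA; apply: imA_alpha.
Qed.

Lemma wmor_psi_f m : phi (psi_f P m) = psi_f Q (phi m).
Proof. by case: phi_mor => [[_ phi_x _] _]; apply: phi_x. Qed.

End WeakSplittingMorphism.

Theorem theorem5 (K : fieldType) :
  (forall P : wsp K,
     (* the decomposition y m = m_1 + m_2 defining psi_e is well defined *)
     (forall m, imA P m ->
        IM (psi_e P m) /\ imA P (Ry (wM P) m - psi_e P m) /\
        (forall m1 m2, Ry (wM P) m = m1 + m2 -> IM m1 -> imA P m2 ->
           m1 = psi_e P m)) /\
     (* psi_e : im alpha -> M_0 *)
     (forall m, imA P m -> M0 (psi_e P m)) /\
     (* psi_f : im alpha -> im alpha *)
     (forall m, imA P m -> imA P (psi_f P m)) /\
     (* psi_f is invertible on im alpha, i.e. Xi(P) lies in D *)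
     (exists g : wM P -> wM P, forall m, imA P m ->
        [/\ imA P (g m), g (psi_f P m) = m & psi_f P (g m) = m])) /\
  (forall (P Q : wsp K) (phi : wM P -> wM Q), wmor phi ->
     (* Xi(phi) restricts: M_0 -> N_0 and im alpha -> im beta *)
     (forall m, M0 m -> M0 (phi m)) /\
     (forall m, imA P m -> imA Q (phi m)) /\
     (* Xi(phi) is a morphism of Gamma-representations *)
     (forall m, imA P m -> phi (psi_e P m) = psi_e Q (phi m)) /\
     (forall m, imA P m -> phi (psi_f P m) = psi_f Q (phi m))).
Proof.
split=> [P | P Q phi phi_mor].
- split; [|split; [exact: M0_psi_e|split; [exact: imA_psi_f|]]].
  + move=> m _; split; first exact: IM_psi_e.
    split; last exact: psi_e_unique.
    by rewrite y_sub_psi_e; apply: imA_alpha.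
  + exists (psi_f_inv (P := P)) => m m_im.
    by split; [apply: imA_psi_f_inv|apply: psi_fK|apply: psi_f_invK].
- split; first by apply: Rhom_M0; case: phi_mor.
  split; first exact: wmor_imA.
  by split=> m _; [apply: wmor_psi_e|apply: wmor_psi_f].
Qed.
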